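(* $21 \le R_3(L) \le 2593$. In particular, there exists a coloring of $[20]\times[20]$ with 3 colors containing no monochromatic $L$, i.e. no integers $i,j$ and $t\ge 1$ with $(i,j),(i,j+t),(i+t,j+t)\in[20]\times[20]$ all of the same color.
   Context: For $n\in\mathbb{N}$, $[n]=\{1,\dots,n\}$. An $L$ in the grid $[n]\times[n]$ is a set of three lattice points of the form $\{(i,j),(i,j+t),(i+t,j+t)\}$ with $t$ a positive integer. A $c$-coloring of the grid is a function $[n]\times[n]\to[c]$. $R_c(L)$ denotes the least $n$ such that every $c$-coloring of $[n]\times[n]$ contains a monochromatic $L$. *)

From mathcomp Require Import all_boot.
Set Implicit Arguments. Unset Strict Implicit. Unset Printing Implicit Defensive.

(* A c-coloring of the grid [n]x[n] (with [n] = {1,...,n}) is represented by a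
   function nat -> nat -> 'I_c; only its values on [n]x[n] matter. *)
Definition coloring (c : nat) := nat -> nat -> 'I_c.

Definition L_in_grid (n i j t : nat) : Prop :=
  [/\ 1 <= i, 1 <= j, 0 < t, i + t <= n & j + t <= n].

Definition has_mono_L (c n : nat) (f : coloring c) : Prop :=
  exists i j t, L_in_grid n i j t /\ f i j = f i (j + t) /\ f i (j + t) = f (i + t) (j + t).

Definition arrows_L (c n : nat) : Prop := forall f : coloring c, has_mono_L n f.

Definition is_RcL (c r : nat) : Prop :=
  arrows_L c r /\ forall m, m < r -> ~ arrows_L c m.

From mathcomp Require Import all_boot zify.
From Stdlib Require Import Classical.
Set Implicit Arguments. Unset Strict Implicit. Unset Printing Implicit Defensive.

(* For the lower bound, an L-free 3-colouring of [20]x[20] is checked by computation.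
   For the upper bound, let f be an L-free 3-colouring of [n]x[n] with n = 2593 and fix a gap
   d > 0. The columns j with f(1,j) = f(1,j+d) split into six classes according to the pair of
   colours (f(1,j), f(1+d,j+d)), which must differ. Each class is a Sidon set: if a, a + w,
   a + z, a + z + w all lie in one class, the points (1+d+w, a+d+w) and (1+d+w, a+z+d+w) avoid
   both colours of the class, hence share the third one, and then (1+d+w+z, a+z+d+w) has no
   colour left.
   A Sidon subset of [n] has at most 72 elements, so row 1 has at most about 432 n pairs of
   equal colour, whereas by Cauchy-Schwarz it has at least about n^2/6 of them. *)

Lemma leq_card_in_inj (T T' : finType) (A : {pred T}) (B : {set T'}) (h : T -> T') :
  {in A &, injective h} -> {in A, forall x, h x \in B} -> #|A| <= #|B|.
Proof.
move=> h_inj hAB; rewrite -(card_in_imset h_inj); apply: subset_leq_card.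
by apply/subsetP => _ /imsetP[x xA ->]; exact: hAB.
Qed.

Definition lt_pairs n (A : {set 'I_n}) :=
  [set p : 'I_n * 'I_n | [&& p.1 \in A, p.2 \in A & p.1 < p.2]].

Lemma card_lt_pairs n (A : {set 'I_n}) : #|A| * #|A| <= 2 * #|lt_pairs A| + #|A|.
Proof.
set gt_pairs := [set p : 'I_n * 'I_n | [&& p.1 \in A, p.2 \in A & p.2 < p.1]].
set diag := [set p : 'I_n * 'I_n | (p.1 \in A) && (p.1 == p.2)].
have split_AA : #|setX A A| <= #|lt_pairs A| + #|gt_pairs| + #|diag|.
  apply: (leq_trans _ (leq_add (leq_card_setU _ _).1 (leqnn _))).
  apply: (leq_trans _ (leq_card_setU _ _).1).
  apply: subset_leq_card; apply/subsetP => -[a b].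
  rewrite !inE /= => /andP[aA bA]; rewrite aA bA /=.
  by case: (ltngtP a b) => //= /val_inj ->; rewrite eqxx.
have gt_lt : #|gt_pairs| <= #|lt_pairs A|.
  apply: (@leq_card_in_inj _ _ _ _ (fun p => (p.2, p.1))).
    by move=> [a b] [c d] _ _ [-> ->].
  by move=> [a b]; rewrite !inE /= => /and3P[-> -> ->].
have diag_A : #|diag| <= #|A|.
  apply: (@leq_card_in_inj _ _ _ _ fst).
    by move=> [a b] [c d]; rewrite !inE /= => /andP[_ /eqP <-] /andP[_ /eqP <-] ->.
  by move=> [a b]; rewrite !inE /= => /andP[].
rewrite cardsX in split_AA; lia.
Qed.

(* Requiring a < c loses nothing: two increasing pairs with equal first elements and equal
   differences coincide. *)
Definition sidon n (A : {set 'I_n}) := forall a b c e : 'I_n,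
  a \in A -> b \in A -> c \in A -> e \in A -> a < b -> c < e -> a < c -> b - a <> e - c.

Definition gap_of n (p : 'I_n * 'I_n) : 'I_n :=
  Ordinal (leq_ltn_trans (leq_subr p.1 p.2) (ltn_ord p.2)).

Lemma card_lt_pairs_sidon n (A : {set 'I_n}) : sidon A -> #|lt_pairs A| <= n.
Proof.
move=> A_sidon; rewrite -[n in _ <= n]card_ord -cardsT.
apply: (@leq_card_in_inj _ _ _ _ (@gap_of n)); last by move=> *; rewrite inE.
move=> [a b] [c e]; rewrite !inE /= => /and3P[aA bA ab] /and3P[cA eA ce].
move/(congr1 val) => /= gap_eq.
case: (ltngtP a c) => [ac|ca|/val_inj ac].
- by case: (A_sidon a b c e).
- by case: (A_sidon c e a b).
- by congr (_, _); apply: val_inj; move: gap_eq ab ce; rewrite ac /=; lia.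
Qed.

Lemma sidon_card n (A : {set 'I_n}) : sidon A -> #|A| * #|A| <= 2 * n + #|A|.
Proof.
move=> /card_lt_pairs_sidon lt_n; apply: leq_trans (card_lt_pairs A) _.
by rewrite leq_add2r leq_mul2l lt_n orbT.
Qed.

Lemma third_color_unique (u v x y : 'I_3) :
  u <> v -> x <> u -> x <> v -> y <> u -> y <> v -> x = y.
Proof.
have val_neq (a b : 'I_3) : a <> b -> a <> b :> nat by move=> + /val_inj.
move=> /val_neq ? /val_neq ? /val_neq ? /val_neq ? /val_neq ?; apply: ord_inj.
have := ltn_ord u; have := ltn_ord v; have := ltn_ord x; have := ltn_ord y; lia.
Qed.

(* An index i : 'I_n stands for column i + 1 of row 1. *)
Definition gap_class n (f : coloring 3) d (c c' : 'I_3) := [set i : 'I_n |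
  [&& i + d < n, f 1 i.+1 == c, f 1 (i + d).+1 == c & f (1 + d) (i + d).+1 == c']].

Definition gap_starts n (f : coloring 3) d :=
  [set i : 'I_n | (i + d < n) && (f 1 i.+1 == f 1 (i + d).+1)].

Lemma card_gap_starts_tail n f d : #|gap_starts n f d| <= n - d.
Proof.
apply: (@leq_trans #|[set~ @ord_max (n - d)]|); last by rewrite cardsC1 card_ord.
apply: (@leq_card_in_inj _ _ _ _ (fun i : 'I_n => inord i : 'I_(n - d).+1)) => [a b|a].
  rewrite !inE => /andP[ha _] /andP[hb _] /(congr1 val) /=.
  by rewrite !inordK; [move/val_inj | lia | lia].
by rewrite !inE => /andP[ha _]; apply/eqP => /(congr1 val) /=; rewrite inordK /=; lia.
Qed.

Section LFreeColoring.

Variables (n : nat) (f : coloring 3).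
Hypothesis f_free : ~ has_mono_L n f.

Lemma L_top_color c i j t i' k :
  f i j = c -> f i k = c -> k = j + t -> i' = i + t ->
  1 <= i -> 1 <= j -> 0 < t -> i' <= n -> k <= n -> f i' k <> c.
Proof.
move=> eij eik ek ei' i1 j1 t0 it jt eik'; subst k i'.
by apply: f_free; exists i, j, t; rewrite eij eik eik'.
Qed.

Lemma no_two_equal_gaps r A d w z c c' :
  1 <= r -> 1 <= A -> 0 < d -> 0 < w -> 0 < z ->
  r + d + w + z <= n -> A + z + d + w <= n ->
  f r A = c -> f r (A + d) = c -> f r (A + d + w) = c ->
  f r (A + z) = c -> f r (A + z + d + w) = c ->
  f (r + d) (A + d) = c' -> f (r + d) (A + d + w) = c' ->
  f (r + d) (A + z + d) = c' -> f (r + d) (A + z + d + w) = c' -> False.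
Proof.
move=> r1 A1 d0 w0 z0 hr hA e1 e2 e3 e4 e5 e6 e7 e8 e9.
have c'_c : c' <> c by rewrite -e6; apply: (L_top_color (t := d) e1 e2); lia.
have x1_c' : f (r + d + w) (A + d + w) <> c'.
  by apply: (L_top_color (t := w) e6 e7); lia.
have x1_c : f (r + d + w) (A + d + w) <> c.
  by apply: (L_top_color (t := d + w) e1 e3); lia.
have x2_c' : f (r + d + w) (A + z + d + w) <> c'.
  by apply: (L_top_color (t := w) e8 e9); lia.
have x2_c : f (r + d + w) (A + z + d + w) <> c.
  by apply: (L_top_color (t := d + w) e4 e5); lia.
have x12 := third_color_unique c'_c x1_c' x1_c x2_c' x2_c.
have y_c' : f (r + d + w + z) (A + z + d + w) <> c'.
  by apply: (L_top_color (t := w + z) e6 e9); lia.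
have y_c : f (r + d + w + z) (A + z + d + w) <> c.
  by apply: (L_top_color (t := d + w + z) e1 e5); lia.
have y_x2 : f (r + d + w + z) (A + z + d + w) <> f (r + d + w) (A + z + d + w).
  by apply: (L_top_color (t := z) x12 erefl); lia.
exact/y_x2/(third_color_unique c'_c y_c' y_c x2_c' x2_c).
Qed.

Lemma gap_class_sidon d c c' : 0 < d -> sidon (gap_class n f d c c').
Proof.
move=> d0 a b a' b'; rewrite !inE.
move=> /and4P[_ /eqP a1 /eqP a2 /eqP a3] /and4P[_ _ /eqP b2 /eqP b3].
move=> /and4P[_ /eqP a'1 _ /eqP a'3] /and4P[b'n _ /eqP b'2 /eqP b'3] ab ab' aa' gaps.
have col i j j' : j = j' -> f i j = f i j' by move->.
apply: (@no_two_equal_gaps 1 a.+1 d (b - a) (a' - a) c c'); try lia.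
- exact: a1.
- by rewrite -a2; apply: col; lia.
- by rewrite -b2; apply: col; lia.
- by rewrite -a'1; apply: col; lia.
- by rewrite -b'2; apply: col; lia.
- by rewrite -a3; apply: col; lia.
- by rewrite -b3; apply: col; lia.
- by rewrite -a'3; apply: col; lia.
- by rewrite -b'3; apply: col; lia.
Qed.

Lemma gap_class_diag d c : 0 < d -> gap_class n f d c c = set0.
Proof.
move=> d0; apply/setP => i; rewrite !inE; apply/negbTE/and4P => -[i_d /eqP e1 /eqP e2 /eqP e3].
by apply: (L_top_color (t := d) e1 e2 _ _ _ _ _ _ _ e3); lia.
Qed.

Lemma card_gap_starts d : 0 < d -> n <= 2593 -> #|gap_starts n f d| <= 432.
Proof.
move=> d0 n_le.
have card_class c c' : #|gap_class n f d c c'| <= (if c == c' then 0 else 72).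
  case: eqP => [<-|_]; first by rewrite gap_class_diag ?cards0.
  have le72 k : k * k <= 2 * n + k -> k <= 72 by nia.
  exact/le72/sidon_card/gap_class_sidon.
have -> : 432 = \sum_(cc : 'I_3 * 'I_3) if cc.1 == cc.2 then 0 else 72.
  rewrite -(pair_big predT predT (fun c c' => if c == c' then 0 else 72)) /=.
  by rewrite !big_ord_recl !big_ord0.
rewrite -sum1_card.
rewrite (partition_big (fun i : 'I_n => (f 1 i.+1, f (1 + d) (i + d).+1)) predT) //=.
apply: leq_sum => -[c c'] _; apply: leq_trans (card_class c c'); rewrite -sum1_card.
apply/eq_leq/eq_bigl => i; rewrite !inE xpair_eqE.
apply/idP/idP => [/andP[/andP[-> /eqP <-] /andP[/eqP <- ->]]|]; first by rewrite !eqxx.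
by case/and4P => -> /eqP -> /eqP -> ->; rewrite !eqxx.
Qed.

End LFreeColoring.

Definition mono_pairs n (f : coloring 3) :=
  [set p : 'I_n * 'I_n | (p.1 < p.2) && (f 1 p.1.+1 == f 1 p.2.+1)].

Definition color_class n (f : coloring 3) c := [set i : 'I_n | f 1 i.+1 == c].

Lemma card_mono_pairs_gaps n f :
  #|mono_pairs n f| <= \sum_(d < n | 0 < d) #|gap_starts n f d|.
Proof.
rewrite -sum1_card (partition_big (@gap_of n) (fun d => 0 < d)) => [|[a b]]; last first.
  by rewrite inE /= subn_gt0 => /andP[].
apply: leq_sum => d d0; rewrite sum1_card.
apply: (@leq_card_in_inj _ _ _ _ fst) => [[a b] [a' b']|[a b]].
  rewrite -!topredE /= !inE /= => /andP[/andP[ab _] /eqP/(congr1 val)/= gap].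
  move=> /andP[/andP[ab' _] /eqP/(congr1 val)/= gap'] aa'.
  by congr (_, _); apply: val_inj; move: gap gap' ab ab'; rewrite /= aa'; lia.
rewrite inE -topredE /= inE /= => /andP[/andP[ab /eqP color] /eqP/(congr1 val)/= gap].
have -> : a + d = b by move: gap ab; lia.
by rewrite ltn_ord color eqxx.
Qed.

Lemma card_mono_pairs_le m f :
  ~ has_mono_L m.+3 f -> m.+3 <= 2593 -> #|mono_pairs m.+3 f| <= 432 * m + 3.
Proof.
(* The gaps m + 1 and m + 2 have at most 2 and 1 starting points; bounding them by 432 as well
   would be too weak for n = 2593. *)
move=> f_free n_le; apply: leq_trans (card_mono_pairs_gaps _ _) _.
rewrite big_mkcond big_ord_recl big_ord_recr big_ord_recr /=.
have body : \sum_(i < m) (if 0 < lift ord0 i then #|gap_starts m.+3 f (lift ord0 i)| else 0)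
    <= \sum_(i < m) 432.
  by apply: leq_sum => i _; rewrite lift0; exact: card_gap_starts.
have := card_gap_starts_tail m.+3 f m.+1; have := card_gap_starts_tail m.+3 f m.+2.
rewrite (_ : bump 0 m = m.+1) // (_ : bump 0 m.+1 = m.+2) //.
by move: body; rewrite sum_nat_const card_ord /=; lia.
Qed.

Lemma sum_card_color_class n f : \sum_(c < 3) #|color_class n f c| = n.
Proof.
rewrite -[RHS]card_ord -sum1_card (partition_big (fun i : 'I_n => f 1 i.+1) predT) //=.
by apply: eq_bigr => c _; rewrite -sum1_card; apply: eq_bigl => i; rewrite inE.
Qed.

Lemma card_mono_pairs_classes n f :
  #|mono_pairs n f| = \sum_(c < 3) #|lt_pairs (color_class n f c)|.
Proof.
rewrite -sum1_card (partition_big (fun p : 'I_n * 'I_n => f 1 p.1.+1) predT) //=.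
apply: eq_bigr => c _; rewrite -sum1_card; apply: eq_bigl => -[a b]; rewrite !inE /=.
by apply/idP/and3P => [/andP[/andP[ab /eqP <-] /eqP <-]|[/eqP -> /eqP -> ->]]; rewrite ?eqxx.
Qed.

Lemma sqr_sum3_le a b c : (a + b + c) * (a + b + c) <= 3 * (a * a + b * b + c * c).
Proof.
have := (nat_Cauchy a b).1; have := (nat_Cauchy b c).1; have := (nat_Cauchy a c).1.
rewrite !expnS !expn0 !muln1; nia.
Qed.

Lemma card_mono_pairs_ge n f : n * n <= 3 * (2 * #|mono_pairs n f| + n).
Proof.
have := sum_card_color_class n f; rewrite card_mono_pairs_classes !big_ord_recl big_ord0 !addn0.
set a0 := #|color_class n f _|; set a1 := #|color_class n f _|; set a2 := #|color_class n f _|.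
move=> sum_a; have := sqr_sum3_le a0 a1 a2; rewrite -addnA sum_a.
have := card_lt_pairs (color_class n f ord0).
have := card_lt_pairs (color_class n f (lift ord0 ord0)).
have := card_lt_pairs (color_class n f (lift ord0 (lift ord0 ord0))).
rewrite -/a0 -/a1 -/a2; lia.
Qed.

Lemma arrows_L_2593 : arrows_L 3 2593.
Proof.
move=> f; apply: NNPP => f_free.
have := @card_mono_pairs_le 2590 f f_free isT; have := card_mono_pairs_ge 2593 f; lia.
Qed.

Lemma exists_least (P : nat -> Prop) j :
  P j -> exists r, [/\ P r, forall m, m < r -> ~ P m & r <= j].
Proof.
elim/ltn_ind: j => j IH Pj.
have [[m [lt_mj Pm]] | none] := classic (exists m, m < j /\ P m).
  have [r [Pr least le_rm]] := IH m lt_mj Pm.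
  by exists r; split => //; exact: leq_trans le_rm (ltnW lt_mj).
by exists j; split => // m lt_mj Pm; apply: none; exists m.
Qed.

Lemma has_mono_L_le c n m (f : coloring c) :
  n <= m -> has_mono_L n f -> has_mono_L m f.
Proof.
move=> le_nm [i [j [t [[i1 j1 t0 it jt] mono]]]].
by exists i, j, t; split => //; split => //; lia.
Qed.

Definition L_freeb c n (f : coloring c) : bool :=
  all (fun i => all (fun j => all (fun t =>
     ~~ [&& i + t <= n, j + t <= n, f i j == f i (j + t)
          & f i (j + t) == f (i + t) (j + t)])
     (iota 1 n)) (iota 1 n)) (iota 1 n).

Lemma L_freebP c n (f : coloring c) : L_freeb n f -> ~ has_mono_L n f.
Proof.
move=> free [i [j [t [[i1 j1 t0 it jt] [e1 e2]]]]].
have mem k : 1 <= k <= n -> k \in iota 1 n by rewrite mem_iota; lia.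
have /mem iI : 1 <= i <= n by lia.
have /mem jI : 1 <= j <= n by lia.
have /mem tI : 1 <= t <= n by lia.
move/allP/(_ i iI)/allP/(_ j jI)/allP/(_ t tI): free.
by rewrite it jt e1 e2 !eqxx.
Qed.

Definition table20 : seq (seq nat) :=
  [:: [:: 0; 1; 2; 0; 1; 2; 0; 0; 1; 2; 0; 1; 2; 0; 1; 2; 2; 0; 1; 2];
  [:: 0; 0; 1; 2; 0; 1; 2; 1; 1; 2; 0; 1; 2; 0; 1; 2; 0; 2; 0; 2];
  [:: 2; 2; 2; 0; 1; 2; 0; 1; 2; 0; 1; 2; 0; 1; 2; 0; 1; 0; 1; 2];
  [:: 2; 0; 1; 1; 2; 0; 1; 2; 0; 1; 2; 0; 1; 2; 0; 1; 2; 1; 2; 0];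
  [:: 0; 0; 1; 2; 1; 0; 1; 2; 2; 1; 1; 0; 0; 2; 2; 0; 1; 1; 2; 0];
  [:: 2; 2; 1; 0; 1; 0; 2; 0; 1; 2; 2; 0; 1; 0; 1; 2; 2; 2; 0; 1];
  [:: 1; 0; 0; 1; 2; 0; 2; 0; 1; 0; 1; 2; 2; 1; 2; 0; 0; 0; 1; 2];
  [:: 2; 1; 1; 0; 0; 1; 2; 1; 2; 0; 2; 0; 0; 2; 2; 1; 1; 1; 2; 0];
  [:: 1; 0; 0; 2; 2; 1; 0; 1; 0; 1; 0; 1; 2; 0; 0; 2; 2; 2; 0; 1];
  [:: 0; 1; 2; 2; 1; 1; 1; 2; 0; 2; 1; 2; 0; 0; 1; 2; 0; 0; 1; 2];
  [:: 1; 2; 1; 0; 1; 2; 0; 0; 1; 2; 2; 2; 1; 1; 0; 1; 0; 1; 2; 0];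
  [:: 1; 1; 1; 2; 2; 0; 0; 2; 0; 0; 1; 1; 2; 2; 0; 1; 0; 2; 0; 1];
  [:: 1; 0; 2; 1; 0; 2; 1; 2; 1; 2; 2; 0; 0; 0; 1; 2; 1; 0; 1; 2];
  [:: 2; 1; 0; 1; 1; 2; 1; 0; 2; 1; 0; 1; 2; 2; 0; 0; 1; 1; 2; 1];
  [:: 0; 2; 1; 1; 0; 1; 0; 1; 2; 1; 0; 2; 0; 1; 1; 1; 0; 2; 0; 1];
  [:: 2; 0; 0; 0; 2; 0; 2; 0; 1; 1; 0; 2; 2; 2; 0; 0; 1; 0; 1; 2];
  [:: 2; 2; 1; 2; 0; 0; 2; 2; 0; 0; 2; 1; 1; 0; 1; 2; 2; 1; 2; 0];
  [:: 1; 0; 1; 1; 1; 2; 0; 1; 2; 2; 1; 1; 0; 1; 2; 0; 1; 2; 0; 1];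
  [:: 0; 1; 1; 0; 2; 1; 0; 2; 2; 0; 2; 0; 0; 0; 2; 1; 2; 2; 1; 2];
  [:: 1; 1; 0; 0; 0; 2; 1; 2; 1; 0; 0; 2; 1; 2; 2; 1; 1; 0; 1; 0]].

Definition coloring20 : coloring 3 := fun i j =>
  Ordinal (@ltn_pmod (nth 0 (nth [::] table20 i.-1) j.-1) 3 isT).

Theorem theorem3p1 :
  (exists r, is_RcL 3 r /\ 21 <= r <= 2593) /\
  (exists f : coloring 3, ~ has_mono_L 20 f).
Proof.
have free20 : ~ has_mono_L 20 coloring20 by apply: L_freebP; vm_compute.
split; last by exists coloring20.
have [r [arrows_r least le_r]] := @exists_least (arrows_L 3) 2593 arrows_L_2593.
exists r; split => //; rewrite le_r andbT ltnNge; apply/negP => le_r20.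
exact: free20 (has_mono_L_le le_r20 (arrows_r coloring20)).
Qed.
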